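(* If $\theta_0,\theta_1\in V_\Lambda\setminus\mathcal W(\mathcal G)$ lie in the same path component of $V_\Lambda\setminus\mathcal W(\mathcal G)$, then $\mathcal P(\theta_0)=\mathcal P(\theta_1)$.
   Context: Let $\Lambda$ be a finite dimensional algebra over a field with $n$ isoclasses of simple modules, and $\mathrm{mod}\text-\Lambda$ the category of finitely generated right $\Lambda$-modules. Fix a torsion class $\mathcal G\subseteq\mathrm{mod}\text-\Lambda$ (closed under isomorphisms, extensions and quotients). For $B\in\mathcal G$, a subobject of $B$ is a submodule in $\mathcal G$; a subobject $A\subseteq B$ is strict if $A\cap B'\in\mathcal G$ for every subobject $B'$ of $B$; a strict quotient of $B$ is $B/A$ with $A$ a strict subobject. Let $V_\Lambda=\mathrm{Hom}_{\mathbb Z}(K_0\Lambda,\mathbb R)\cong\mathbb R^n$ (with its Euclidean topology); $\theta(M)$ denotes $\theta$ applied to the dimension vector of $M$. For $M\in\mathcal G$, the pseudo-wall $D_{\mathcal G}(M)$ is the set of $\theta\in V_\Lambda$ with $\theta(M)=0$ and $\theta(M')\le0$ for every strict subobject $M'$ of $M$. $\mathcal W(\theta)$ is the class of $X\in\mathcal G$ with $\theta\in D_{\mathcal G}(X)$, and $\mathcal W(\mathcal G)$ is the set of $\theta$ with $\mathcal W(\theta)\ne\{0\}$, equivalently the union of the $D_{\mathcal G}(M)$ over nonzero $M\in\mathcal G$. $\mathcal P(\theta)$ is the class consisting of $0$ and all nonzero $M\in\mathcal G$ such that $\theta(M'')>0$ for every nonzero strict quotient $M''$ of $M$ (including $M''=M$).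 *)

From HB Require Import structures.
From mathcomp Require Import all_boot all_order all_algebra all_field.
From mathcomp Require Import mxrepresentation.
From mathcomp Require Import all_classical all_reals all_analysis.

Set Implicit Arguments.
Unset Strict Implicit.
Unset Printing Implicit Defensive.

Import Order.TTheory GRing.Theory Num.Theory.
Local Open Scope ring_scope.

(* A finitely generated right A-module is encoded concretely as the row
   space F^d together with the action map [ract : A -> 'M_d]:
   the action of a on a row vector v is v *m ract a. *)
Record rmod (F : fieldType) (A : falgType F) := RMod {
  rdim : nat;
  ract : A -> 'M[F]_rdim }.

Definition is_rmod (F : fieldType) (A : falgType F) (M : rmod A) : Prop :=
  [/\ (forall (k : F) (a b : A), ract M (k *: a + b) = k *: ract M a + ract M b),
      ract M 1 = 1%:M
    & (forall a b : A, ract M (a * b) = ract M a *m ract M b)].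

Definition is_submod (F : fieldType) (A : falgType F) (M : rmod A)
    (U : 'M[F]_(rdim M)) : Prop :=
  forall a : A, (U *m ract M a <= U)%MS.

Definition subm (F : fieldType) (A : falgType F) (M : rmod A)
    (U : 'M[F]_(rdim M)) : rmod A :=
  @RMod F A (\rank U) (fun a => in_submod U (val_submod 1%:M *m ract M a)).

Definition quotm (F : fieldType) (A : falgType F) (M : rmod A)
    (U : 'M[F]_(rdim M)) : rmod A :=
  @RMod F A (\rank (cokermx U))
    (fun a => in_factmod U (val_factmod 1%:M *m ract M a)).

Definition rmod_iso (F : fieldType) (A : falgType F) (M N : rmod A) : Prop :=
  rdim M = rdim N /\
  exists P : 'M[F]_(rdim M, rdim N),
    \rank P = rdim M /\ forall a : A, ract M a *m P = P *m ract N a.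

Definition torsion_class (F : fieldType) (A : falgType F) (G : rmod A -> Prop)
  : Prop :=
  [/\ (forall M N : rmod A, is_rmod M -> is_rmod N -> rmod_iso M N ->
         G M -> G N),
      (forall (M : rmod A) (U : 'M[F]_(rdim M)), is_rmod M -> is_submod U ->
         G M -> G (quotm U))
    & (forall (M : rmod A) (U : 'M[F]_(rdim M)), is_rmod M -> is_submod U ->
         G (subm U) -> G (quotm U) -> G M)].

Definition subobj (F : fieldType) (A : falgType F) (G : rmod A -> Prop)
    (B : rmod A) (U : 'M[F]_(rdim B)) : Prop :=
  is_submod U /\ G (subm U).

Definition strict_subobj (F : fieldType) (A : falgType F) (G : rmod A -> Prop)
    (B : rmod A) (U : 'M[F]_(rdim B)) : Prop :=
  subobj G U /\
  forall V : 'M[F]_(rdim B), subobj G V -> G (subm (U :&: V)%MS).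

(* V_Lambda = Hom_Z(K_0 Lambda, R): the additive functions on mod-Lambda,
   i.e. iso-invariant functions additive on short exact sequences
   0 -> U -> M -> M/U -> 0. theta(M) is then theta of the class [M]. *)
Definition in_V (F : fieldType) (A : falgType F) (R : realType)
    (theta : rmod A -> R) : Prop :=
  (forall M N : rmod A, is_rmod M -> is_rmod N -> rmod_iso M N ->
     theta M = theta N) /\
  (forall (M : rmod A) (U : 'M[F]_(rdim M)), is_rmod M -> is_submod U ->
     theta M = theta (subm U) + theta (quotm U)).

Definition in_pseudo_wall (F : fieldType) (A : falgType F) (R : realType)
    (G : rmod A -> Prop) (M : rmod A) (theta : rmod A -> R) : Prop :=
  theta M = 0 /\
  forall U : 'M[F]_(rdim M), strict_subobj G U -> theta (subm U) <= 0.

Definition in_W (F : fieldType) (A : falgType F) (R : realType)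
    (G : rmod A -> Prop) (theta : rmod A -> R) : Prop :=
  exists M : rmod A,
    [/\ is_rmod M, G M, (0 < rdim M)%N & in_pseudo_wall G M theta].

Definition in_P (F : fieldType) (A : falgType F) (R : realType)
    (G : rmod A -> Prop) (theta : rmod A -> R) (M : rmod A) : Prop :=
  is_rmod M /\
  (rdim M = 0%N \/
   (G M /\
    forall U : 'M[F]_(rdim M), strict_subobj G U ->
      (0 < rdim (quotm U))%N -> 0 < theta (quotm U))).

From HB Require Import structures.
From mathcomp Require Import all_boot all_order all_algebra all_field.
From mathcomp Require Import mxrepresentation.
From mathcomp Require Import all_classical all_reals all_analysis.
From mathcomp Require Import zify.

(* Follow a module N of G along the path.  A strict quotient of a strict
   quotient of N is again a strict quotient of N: if U is strict in N and W is
   strict in N/U, the preimage V of W is strict, since for every subobject V'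
   the module V :&: V' is an extension of W :&: (image of V' in N/U) by
   U :&: V' (second and third isomorphism theorems and the modular law).
   So, by induction on the dimension, every strict quotient N/U with U <> 0
   stays positive along the whole path, and positivity can only be lost at
   U = 0, where N/U is N itself.  At a zero c of t |-> gamma t N (intermediate
   value theorem), gamma c N = 0 and gamma c U = - gamma c (N/U) <= 0 for every
   strict subobject U, i.e. gamma c lies on the pseudo-wall of N, which the
   path avoids. *)

Import Order.TTheory GRing.Theory Num.Theory numFieldNormedType.Exports.
Set Implicit Arguments.
Unset Strict Implicit.
Unset Printing Implicit Defensive.
Local Open Scope ring_scope.
Local Open Scope classical_set_scope.

Local Notation congmx B x y := (x - y <= B)%MS.
Local Notation vsub U := (@val_submod _ _ U _ 1%:M).
Local Notation vfact U := (@val_factmod _ _ U _ 1%:M).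

Section RowSpaceCongruence.
Variables (F : fieldType) (m mb n : nat) (B : 'M[F]_(mb, n)).
Implicit Types x y z : 'M[F]_(m, n).

Lemma congmx_refl x : congmx B x x.
Proof. by rewrite subrr sub0mx. Qed.

Lemma congmx_sym x y : congmx B x y -> congmx B y x.
Proof. by rewrite -opprB eqmx_opp. Qed.

Lemma congmx_trans y x z : congmx B x y -> congmx B y z -> congmx B x z.
Proof. by move=> hxy hyz; rewrite -(subrKA y); apply: addmx_sub. Qed.

Lemma congmxD x y x' y' :
  congmx B x y -> congmx B x' y' -> congmx B (x + x') (y + y').
Proof. by move=> h h'; rewrite opprD addrACA; apply: addmx_sub. Qed.

Lemma congmxZ (k : F) x y : congmx B x y -> congmx B (k *: x) (k *: y).
Proof. by move=> h; rewrite -scalerBr; apply: scalemx_sub. Qed.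

Lemma congmxMl p (C : 'M[F]_(p, m)) x y : congmx B x y -> congmx B (C *m x) (C *m y).
Proof. by move=> h; rewrite -mulmxBr; apply: mulmx_sub. Qed.

Lemma congmxMr p mb' (C : 'M[F]_(n, p)) (B' : 'M[F]_(mb', p)) x y :
  congmx B x y -> (B *m C <= B')%MS -> congmx B' (x *m C) (y *m C).
Proof. by move=> h hB; rewrite -mulmxBl; apply: submx_trans (submxMr _ h) hB. Qed.

End RowSpaceCongruence.

(* [embeds_mod N X B E]: B is an A-stable row space of N and E induces an
   injective module map from X into N / B.  Every module below is handled as
   a subquotient of a fixed N in this way. *)
Definition embeds_mod (F : fieldType) (A : falgType F) (N X : rmod A) mb
    (B : 'M[F]_(mb, rdim N)) (E : 'M[F]_(rdim X, rdim N)) :=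
  [/\ forall a, (B *m ract N a <= B)%MS,
      forall m (z : 'M[F]_(m, rdim X)), (z *m E <= B)%MS -> z = 0
    & forall a, congmx B (ract X a *m E) (E *m ract N a)].
Arguments embeds_mod {F A} N X {mb} B E.

Section SubquotientEmbedding.
Variables (F : fieldType) (A : falgType F).
Implicit Types N X Y : rmod A.

Lemma embeds_mod_inj N X mb (B : 'M[F]_(mb, rdim N)) E m (x y : 'M[F]_(m, rdim X)) :
  embeds_mod N X B E -> congmx B (x *m E) (y *m E) -> x = y.
Proof. by case=> _ inj _ h; apply: subr0_eq; apply: inj; rewrite mulmxBl. Qed.

Lemma embeds_mod_id N : embeds_mod N N (0 : 'M[F]_(rdim N)) 1%:M.
Proof.
split=> [a|m z|a]; first by rewrite mul0mx.
  by rewrite mulmx1 submx0 => /eqP.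
by rewrite mulmx1 mul1mx congmx_refl.
Qed.

Lemma embeds_mod_rmod N X mb (B : 'M[F]_(mb, rdim N)) E :
  is_rmod N -> embeds_mod N X B E -> is_rmod X.
Proof.
move=> [linN unitN mulN] emb; have [stB _ intw] := emb.
split=> [k a b||a b]; apply: (embeds_mod_inj emb); apply: congmx_trans (intw _) _.
- rewrite linN mulmxDr -scalemxAr mulmxDl -scalemxAl.
  by apply: congmxD; [apply: congmxZ|]; apply/congmx_sym/intw.
- by rewrite unitN mulmx1 mul1mx congmx_refl.
- rewrite mulN !mulmxA; apply: (congmx_trans (y := ract X a *m E *m ract N b)).
    exact: congmxMr (congmx_sym (intw a)) (stB b).
  by rewrite -!mulmxA; apply/congmxMl/congmx_sym/intw.
Qed.

Lemma embeds_mod_subm N X mb (B : 'M[F]_(mb, rdim N)) E (W : 'M[F]_(rdim X)) :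
  embeds_mod N X B E -> is_submod W -> embeds_mod N (subm W) B (vsub W *m E).
Proof.
case=> stB inj intw hW; split=> // [m z|a /=].
  by rewrite mulmxA -val_submodE => /inj /eqP; rewrite val_submod_eq0 => /eqP.
rewrite mulmxA -val_submodE in_submodK; last first.
  exact: submx_trans (submxMr _ (val_submodP _)) (hW a).
by rewrite -!(mulmxA (vsub W)); apply/congmxMl/intw.
Qed.

Lemma embeds_mod_quotm N X mb (B : 'M[F]_(mb, rdim N)) E (W : 'M[F]_(rdim X)) :
  embeds_mod N X B E -> is_submod W ->
  embeds_mod N (quotm W) (B + W *m E)%MS (vfact W *m E).
Proof.
case=> stB inj intw hW; split=> [a|m z|a /=].
- rewrite addsmxMr addsmx_sub (submx_trans (stB a) (addsmxSl _ _)) /=.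
  rewrite -(subrK (W *m ract X a *m E) (W *m E *m ract N a)).
  apply: addmx_sub; last by apply: submx_trans (addsmxSr _ _); apply: submxMr.
  apply: submx_trans (addsmxSl _ _).
  by rewrite -!mulmxA; apply/congmxMl/congmx_sym/intw.
- case/sub_addsmxP=> -[u1 u2] /= hz.
  have zW : z *m vfact W = u2 *m W.
    apply: subr0_eq; apply: inj.
    by rewrite mulmxBl -(mulmxA z) hz -(mulmxA u2) addrK submxMl.
  rewrite -[z](val_factmodK (U := W)); apply/eqP.
  by rewrite in_factmod_eq0 val_factmodE zW submxMl.
- rewrite mulmxA -val_factmodE.
  set y := vfact W *m ract X a.
  have -> : val_factmod (in_factmod W y) = y - val_submod (in_submod W y).
    by rewrite -{2}(add_sub_fact_mod W y) addrC addKr.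
  rewrite mulmxBl addrAC; apply: addmx_sub.
    apply: submx_trans (addsmxSl _ _).
    by rewrite /y -!(mulmxA (vfact W)); apply/congmxMl/intw.
  rewrite eqmx_opp; apply: submx_trans (addsmxSr _ _).
  exact/submxMr/val_submodP.
Qed.

Lemma embeds_mod_widen N X mb (B : 'M[F]_(mb, rdim N)) E mb' (B' : 'M[F]_(mb', rdim N)) :
  embeds_mod N X B E -> (B <= B')%MS -> (forall a, B' *m ract N a <= B')%MS ->
  ((E + B)%MS :&: B' <= B)%MS -> embeds_mod N X B' E.
Proof.
case=> _ inj intw sBB' stB' capB; split=> // [m z zB'|a].
  apply: inj; apply: submx_trans capB.
  by rewrite sub_capmx zB' andbT; apply: submx_trans (addsmxSl _ _); apply: submxMl.
exact: submx_trans (intw a) sBB'.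
Qed.

Lemma embeds_mod_eqmx N X mb (B : 'M[F]_(mb, rdim N)) E mb' (B' : 'M[F]_(mb', rdim N)) :
  embeds_mod N X B E -> (B :=: B')%MS -> embeds_mod N X B' E.
Proof.
move=> emb eqB; have [stB _ _] := emb.
apply: (embeds_mod_widen emb); rewrite -?eqB //.
  by move=> a; rewrite -(eqmxMr _ eqB) -eqB stB.
by apply: submx_trans (capmxSr _ _) _; rewrite eqB.
Qed.

Lemma embeds_mod_factor N X Y mb (B : 'M[F]_(mb, rdim N)) E E' :
  embeds_mod N X B E -> (E <= E' + B)%MS ->
  exists P : 'M[F]_(rdim X, rdim Y), row_free P /\ congmx B E (P *m E').
Proof.
move=> [_ inj _] /sub_addsmxP [[P u] /= defE]; exists P.
have EP : congmx B E (P *m E') by rewrite defE addrAC subrr add0r submxMl.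
split=> //; rewrite -kermx_eq0; apply/eqP; apply: inj.
rewrite -(subrK (P *m E') E) mulmxDr mulmxA mulmx_ker mul0mx addr0.
exact: mulmx_sub.
Qed.

Lemma embeds_mod_iso N X Y mb (B : 'M[F]_(mb, rdim N)) E E' :
  embeds_mod N X B E -> embeds_mod N Y B E' ->
  (E <= E' + B)%MS -> (E' <= E + B)%MS -> rmod_iso X Y.
Proof.
move=> embX embY sEE' sE'E.
have [P [freeP EP]] := embeds_mod_factor (Y := Y) embX sEE'.
have [P' [freeP' _]] := embeds_mod_factor (Y := X) embY sE'E.
have dimXY : rdim X = rdim Y.
  move: freeP freeP'; rewrite /row_free => /eqP rkP /eqP rkP'.
  by apply/eqP; rewrite eqn_leq -{1}rkP -{3}rkP' !rank_leq_col.
split=> //; exists P; split=> [|a]; first exact/eqP.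
have [stB _ intwX] := embX; have [_ _ intwY] := embY.
apply: (embeds_mod_inj embY).
apply: (congmx_trans (y := ract X a *m E)).
  by rewrite -mulmxA; apply/congmxMl/congmx_sym.
apply: congmx_trans (intwX a) _.
apply: (congmx_trans (y := P *m E' *m ract N a)); first exact: congmxMr EP (stB a).
by rewrite -!mulmxA; apply/congmxMl/congmx_sym.
Qed.

Lemma embeds_mod_submod N X mb (B : 'M[F]_(mb, rdim N)) E ms
    (S : 'M[F]_(ms, rdim N)) (Y : 'M[F]_(rdim X)) :
  embeds_mod N X B E -> (forall a, S *m ract N a <= S)%MS ->
  (Y *m E <= S)%MS -> (S <= Y *m E + B)%MS -> is_submod Y.
Proof.
move=> emb stS sYS sSY a; have [stB _ intw] := emb.
have : (Y *m ract X a *m E <= Y *m E + B)%MS.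
  rewrite -(subrK (Y *m E *m ract N a) (Y *m ract X a *m E)).
  apply: addmx_sub.
    by apply: submx_trans (addsmxSr _ _); rewrite -!mulmxA; apply/congmxMl/intw.
  exact: submx_trans (submxMr _ sYS) (submx_trans (stS a) sSY).
case/sub_addsmxP=> -[u1 u2] /= defYa.
suff -> : Y *m ract X a = u1 *m Y by apply: submxMl.
by apply: (embeds_mod_inj emb); rewrite defYa -mulmxA addrAC subrr add0r submxMl.
Qed.

End SubquotientEmbedding.

Section ModuleBasics.
Variables (F : fieldType) (A : falgType F).
Implicit Types N X Y : rmod A.

Lemma mx_dim0_eq m k (P Q : 'M[F]_(m, k)) : m = 0%N -> P = Q.
Proof. by move=> m0; apply/matrixP => i; move: (ltn_ord i); rewrite {2}m0. Qed.

Lemma sub1_adds_factmod n (U : 'M[F]_n) : (1%:M <= U + vfact U)%MS.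
Proof.
rewrite -{1}(add_sub_fact_mod U 1%:M) addmx_sub_adds ?val_submodP //.
by rewrite val_factmodE submxMl.
Qed.

Lemma is_rmod_dim0 X : rdim X = 0%N -> is_rmod X.
Proof. by move=> X0; split=> *; apply: mx_dim0_eq. Qed.

Lemma rmod_iso_dim0 X Y : rdim X = 0%N -> rdim Y = 0%N -> rmod_iso X Y.
Proof.
move=> X0 Y0; split; first by rewrite X0 Y0.
by exists 0; split=> [|a]; [rewrite mxrank0 X0 | apply: mx_dim0_eq].
Qed.

Lemma rmod_iso_sym X Y :
  rmod_iso X Y -> rmod_iso Y X.
Proof.
case=> dimXY [P [rkP intwP]].
have fullP : row_full P by rewrite /row_full rkP dimXY.
have freeP : row_free P by rewrite /row_free rkP.
split=> //; exists (pinvmx P); split=> [|a]; first exact/eqP/pinvmx_free.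
rewrite -[LHS]mul1mx -(mulVpmx fullP) -!mulmxA (mulmxA P) -intwP.
by rewrite -!mulmxA mulmxVp // mulmx1.
Qed.

Lemma is_submod0 N : is_submod (0 : 'M[F]_(rdim N)).
Proof. by move=> a; rewrite mul0mx sub0mx. Qed.

Lemma is_submod1 N : is_submod (1%:M : 'M[F]_(rdim N)).
Proof. by move=> a; apply: submx1. Qed.

Lemma is_submod_cap N (U V : 'M[F]_(rdim N)) :
  is_submod U -> is_submod V -> is_submod (U :&: V)%MS.
Proof.
move=> hU hV a; rewrite sub_capmx.
rewrite (submx_trans (submxMr _ (capmxSl _ _)) (hU a)).
exact: submx_trans (submxMr _ (capmxSr _ _)) (hV a).
Qed.

Lemma embeds_subm N (U : 'M[F]_(rdim N)) :
  is_submod U -> embeds_mod N (subm U) (0 : 'M[F]_(rdim N)) (vsub U).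
Proof. by move=> hU; rewrite -[vsub U]mulmx1; apply: embeds_mod_subm (embeds_mod_id N) hU. Qed.

Lemma embeds_quotm N (U : 'M[F]_(rdim N)) :
  is_submod U -> embeds_mod N (quotm U) U (vfact U).
Proof.
move=> hU; have := embeds_mod_quotm (embeds_mod_id N) hU; rewrite !mulmx1.
by move/embeds_mod_eqmx; apply; apply: adds0mx.
Qed.

Lemma is_rmod_subm N (U : 'M[F]_(rdim N)) :
  is_rmod N -> is_submod U -> is_rmod (subm U).
Proof. by move=> hN hU; apply: embeds_mod_rmod hN (embeds_subm hU). Qed.

Lemma is_rmod_quotm N (U : 'M[F]_(rdim N)) :
  is_rmod N -> is_submod U -> is_rmod (quotm U).
Proof. by move=> hN hU; apply: embeds_mod_rmod hN (embeds_quotm hU). Qed.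

Lemma rmod_iso_subm_eqmx N (S T : 'M[F]_(rdim N)) :
  is_submod S -> is_submod T -> (S :=: T)%MS -> rmod_iso (subm S) (subm T).
Proof.
move=> hS hT eqST; apply: (embeds_mod_iso (embeds_subm hS) (embeds_subm hT)).
  by rewrite addsmx0 !val_submod1 eqST.
by rewrite addsmx0 !val_submod1 eqST.
Qed.

Lemma rmod_iso_subm1 N : rmod_iso N (subm (1%:M : 'M[F]_(rdim N))).
Proof.
apply: (embeds_mod_iso (embeds_mod_id N) (embeds_subm (is_submod1 N))).
  by rewrite addsmx0 val_submod1.
by rewrite addsmx0 submx1.
Qed.

Lemma in_V_dim0 (R : realType) (theta : rmod A -> R) X :
  in_V theta -> rdim X = 0%N -> theta X = 0.
Proof.
move=> [isoV addV] X0; have hX := is_rmod_dim0 X0.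
have S0 : rdim (subm (0 : 'M[F]_(rdim X))) = 0%N by rewrite /= mxrank0.
have Q0 : rdim (quotm (0 : 'M[F]_(rdim X))) = 0%N.
  by rewrite /= mxrank_coker mxrank0 X0.
have := addV X 0 hX (is_submod0 X).
rewrite -(isoV _ _ hX (is_rmod_dim0 S0) (rmod_iso_dim0 X0 S0)).
rewrite -(isoV _ _ hX (is_rmod_dim0 Q0) (rmod_iso_dim0 X0 Q0)).
by move=> e; apply: (addrI (theta X)); rewrite addr0 -e.
Qed.

End ModuleBasics.

Section RelativeSubmodule.
Variables (F : fieldType) (A : falgType F).
Implicit Types N : rmod A.

Definition insubmx N (T S : 'M[F]_(rdim N)) : 'M[F]_(rdim (subm T)) :=
  <<in_submod T S>>%MS.

Lemma insubmxK N (T S : 'M[F]_(rdim N)) :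
  (S <= T)%MS -> (insubmx T S *m vsub T :=: S)%MS.
Proof.
move=> sST; apply: eqmx_trans (eqmxMr _ (genmxE _)) _.
by rewrite -val_submodE in_submodK.
Qed.

Lemma is_submod_insubmx N (T S : 'M[F]_(rdim N)) :
  is_submod T -> is_submod S -> (S <= T)%MS -> is_submod (insubmx T S).
Proof.
move=> hT hS sST; apply: (embeds_mod_submod (embeds_subm hT) hS).
  by rewrite insubmxK.
by rewrite addsmx0 insubmxK.
Qed.

Lemma rmod_iso_subm_insubmx N (T S : 'M[F]_(rdim N)) :
  is_submod T -> is_submod S -> (S <= T)%MS ->
  rmod_iso (subm S) (subm (insubmx T S)).
Proof.
move=> hT hS sST.
have embS := embeds_mod_subm (embeds_subm hT) (is_submod_insubmx hT hS sST).
apply: (embeds_mod_iso (embeds_subm hS) embS);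
  by rewrite addsmx0 (eqmxMr _ (val_submod1 _)) insubmxK // val_submod1.
Qed.

Lemma embeds_quotm_insubmx N (T S : 'M[F]_(rdim N)) :
  is_submod T -> is_submod S -> (S <= T)%MS ->
  embeds_mod N (quotm (insubmx T S)) S (vfact (insubmx T S) *m vsub T).
Proof.
move=> hT hS sST.
have := embeds_mod_quotm (embeds_subm hT) (is_submod_insubmx hT hS sST).
by move/embeds_mod_eqmx; apply; apply: eqmx_trans (adds0mx _ _) (insubmxK sST).
Qed.

Lemma insubmx_span N (T S : 'M[F]_(rdim N)) :
  (S <= T)%MS -> (T <= vfact (insubmx T S) *m vsub T + S)%MS.
Proof.
move=> sST; apply: submx_trans (_ : T <= 1%:M *m vsub T)%MS _.
  by rewrite mul1mx val_submod1.
apply: submx_trans (submxMr _ (sub1_adds_factmod (insubmx T S))) _.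
by rewrite addsmxMr addsmxC addsmxS // insubmxK.
Qed.

End RelativeSubmodule.

Definition factmod_image (F : fieldType) (A : falgType F) (N : rmod A)
    (U V : 'M[F]_(rdim N)) : 'M[F]_(rdim (quotm U)) :=
  <<in_factmod U V>>%MS.

Definition factmod_preim (F : fieldType) (A : falgType F) (N : rmod A)
    (U : 'M[F]_(rdim N)) (W : 'M[F]_(rdim (quotm U))) :=
  (U + W *m vfact U)%MS.
Arguments factmod_preim {F A N} U W.

Section IsomorphismTheorems.
Variables (F : fieldType) (A : falgType F).
Implicit Types N : rmod A.

Lemma factmod_image_sub N (U V : 'M[F]_(rdim N)) :
  (factmod_image U V *m vfact U <= U + V)%MS.
Proof. by rewrite (eqmxMr _ (genmxE _)) -val_factmodE proj_factmodS. Qed.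

Lemma sub_factmod_image N (U V : 'M[F]_(rdim N)) :
  (V <= U + factmod_image U V *m vfact U)%MS.
Proof.
rewrite (adds_eqmx (eqmx_refl U) (eqmxMr _ (genmxE _))) -val_factmodE.
by rewrite -{1}(add_sub_fact_mod U V) addmx_sub_adds ?val_submodP.
Qed.

Lemma in_factmod_preim N (U : 'M[F]_(rdim N)) W :
  (in_factmod U (factmod_preim U W) :=: W)%MS.
Proof. by apply: eqmx_trans (in_factmod_addsK _ _) _; rewrite -val_factmodE val_factmodK. Qed.

Lemma factmod_preim_cap N (U : 'M[F]_(rdim N)) (Y1 Y2 : 'M[F]_(rdim (quotm U))) :
  (factmod_preim U Y1 :&: factmod_preim U Y2 <= U + (Y1 :&: Y2) *m vfact U)%MS.
Proof.
set x := (_ :&: _)%MS.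
have in_preim Y : (x <= factmod_preim U Y)%MS -> (in_factmod U x <= Y)%MS.
  by move=> sxY; rewrite -(in_factmod_preim Y); apply: submxMr.
rewrite -{1}(add_sub_fact_mod U x) addmx_sub_adds ?val_submodP //.
by rewrite val_factmodE submxMr // sub_capmx !in_preim ?capmxSl ?capmxSr.
Qed.

Lemma is_submod_of_span N (U C : 'M[F]_(rdim N)) (Y : 'M[F]_(rdim (quotm U))) :
  is_submod U -> is_submod C ->
  (C <= U + Y *m vfact U)%MS -> (Y *m vfact U <= U + C)%MS -> is_submod Y.
Proof.
move=> hU hC sCY sYC.
apply: (embeds_mod_submod (embeds_quotm hU) (S := (U + C)%MS)) => //.
  by move=> a; rewrite addsmxMr addsmxS.
by rewrite addsmx_sub addsmxSr addsmxC.
Qed.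

Lemma is_submod_factmod_image N (U V : 'M[F]_(rdim N)) :
  is_submod U -> is_submod V -> is_submod (factmod_image U V).
Proof.
by move=> hU hV; apply: is_submod_of_span hU hV (sub_factmod_image U V) (factmod_image_sub U V).
Qed.

Lemma rmod_iso_quotm_cap N (U C : 'M[F]_(rdim N)) (Y : 'M[F]_(rdim (quotm U))) :
  is_submod U -> is_submod C ->
  (C <= U + Y *m vfact U)%MS -> (Y *m vfact U <= U + C)%MS ->
  rmod_iso (quotm (insubmx C (U :&: C)%MS)) (subm Y).
Proof.
move=> hU hC sCY sYC; set E := vfact (insubmx C (U :&: C)%MS) *m vsub C.
have sEC : (E <= C)%MS by apply: submx_trans (submxMl _ _) _; rewrite val_submod1.
have embQ : embeds_mod N (quotm (insubmx C (U :&: C)%MS)) U E.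
  apply: (embeds_mod_widen (embeds_quotm_insubmx hC (is_submod_cap hU hC) (capmxSr U C))
    (capmxSl U C) hU).
  by rewrite sub_capmx capmxSr (submx_trans (capmxSl _ _)) // addsmx_sub sEC capmxSr.
have embY := embeds_mod_subm (embeds_quotm hU) (is_submod_of_span hU hC sCY sYC).
apply: (embeds_mod_iso embQ embY).
  rewrite (adds_eqmx (eqmxMr _ (val_submod1 _)) (eqmx_refl U)) addsmxC.
  exact: submx_trans sEC sCY.
rewrite (eqmxMr _ (val_submod1 _)); apply: (submx_trans sYC); rewrite addsmx_sub addsmxSr /=.
apply: submx_trans (insubmx_span (capmxSr U C)) _.
by rewrite addsmxS // capmxSl.
Qed.

Lemma is_submod_factmod_preim N (U : 'M[F]_(rdim N)) W :
  is_submod U -> is_submod W -> is_submod (factmod_preim U W).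
Proof. by move=> hU hW; case: (embeds_mod_quotm (embeds_quotm hU) hW). Qed.

Lemma rmod_iso_quotm_preim N (U : 'M[F]_(rdim N)) W :
  is_submod U -> is_submod W -> rmod_iso (quotm W) (quotm (factmod_preim U W)).
Proof.
move=> hU hW; have hV := is_submod_factmod_preim hU hW.
apply: (embeds_mod_iso (embeds_mod_quotm (embeds_quotm hU) hW) (embeds_quotm hV)).
  by apply: submx_trans (submx1 _) _; rewrite addsmxC sub1_adds_factmod.
apply: submx_trans (submx1 _) _; apply: submx_trans (sub1_adds_factmod U) _.
rewrite addsmx_sub (submx_trans (addsmxSl U _) (addsmxSr _ _)) /=.
apply: (submx_trans (_ : _ <= (W + vfact W)%MS *m vfact U)%MS).
  by rewrite -{1}[vfact U]mul1mx submxMr // sub1_adds_factmod.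
by rewrite addsmxMr addsmxC addsmxS // addsmxSr.
Qed.

End IsomorphismTheorems.

Section StrictSubobjects.
Variables (F : fieldType) (A : falgType F) (G : rmod A -> Prop).
Hypothesis tcG : torsion_class G.
Implicit Types N X : rmod A.

Lemma G_dim0 N X : is_rmod N -> G N -> rdim X = 0%N -> G X.
Proof.
move=> hN GN X0; have [isoG quotG _] := tcG.
have Q0 : rdim (quotm (1%:M : 'M[F]_(rdim N))) = 0%N.
  by rewrite /= mxrank_coker mxrank1 subnn.
apply: (isoG _ _ (is_rmod_quotm hN (is_submod1 N)) (is_rmod_dim0 X0) (rmod_iso_dim0 Q0 X0)).
exact: quotG _ _ hN (is_submod1 N) GN.
Qed.

Lemma strict_subobj0 N : is_rmod N -> G N -> strict_subobj G (0 : 'M[F]_(rdim N)).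
Proof.
move=> hN GN; split.
  by split; [apply: is_submod0 | apply: G_dim0 hN GN _; rewrite /= mxrank0].
by move=> V _; rewrite cap0mx; apply: G_dim0 hN GN _; rewrite /= mxrank0.
Qed.

Lemma G_subm_eqmx N (S T : 'M[F]_(rdim N)) :
  is_rmod N -> is_submod S -> (S :=: T)%MS -> G (subm S) -> G (subm T).
Proof.
move=> hN hS eqST; have [isoG _ _] := tcG.
have hT : is_submod T by move=> a; rewrite -eqST -(eqmxMr _ eqST).
exact: isoG _ _ (is_rmod_subm hN hS) (is_rmod_subm hN hT) (rmod_iso_subm_eqmx hS hT eqST).
Qed.

Lemma G_factmod_image N (U V : 'M[F]_(rdim N)) :
  is_rmod N -> is_submod U -> is_submod V -> G (subm V) ->
  G (subm (factmod_image U V)).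
Proof.
move=> hN hU hV GV; have [isoG quotG _] := tcG.
have hQ := is_submod_insubmx hV (is_submod_cap hU hV) (capmxSr U V).
apply: (isoG _ _ _ (is_rmod_subm (is_rmod_quotm hN hU) (is_submod_factmod_image hU hV))
  (rmod_iso_quotm_cap hU hV (sub_factmod_image U V) (factmod_image_sub U V))).
  exact: is_rmod_quotm (is_rmod_subm hN hV) hQ.
exact: quotG _ _ (is_rmod_subm hN hV) hQ GV.
Qed.

Lemma G_cap_factmod_preim N (U : 'M[F]_(rdim N)) (W : 'M[F]_(rdim (quotm U)))
    (V' : 'M[F]_(rdim N)) :
  is_rmod N -> strict_subobj G U -> strict_subobj G W ->
  is_submod V' -> G (subm V') -> G (subm (factmod_preim U W :&: V')%MS).
Proof.
move=> hN [[hU _] strU] [[hW _] strW] hV' GV'; have [isoG _ extG] := tcG.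
set V := factmod_preim U W; set C := (V :&: V')%MS.
set Y := (W :&: factmod_image U V')%MS.
have hC : is_submod C := is_submod_cap (is_submod_factmod_preim hU hW) hV'.
have hUC : is_submod (U :&: C)%MS := is_submod_cap hU hC.
have sCY : (C <= U + Y *m vfact U)%MS.
  apply: submx_trans (factmod_preim_cap W (factmod_image U V')).
  exact: capmxS (submx_refl V) (sub_factmod_image U V').
have sYC : (Y *m vfact U <= U + C)%MS.
  rewrite /C capmxC (matrix_modl V' (addsmxSl U _)) sub_capmx.
  rewrite (submx_trans (submxMr _ (capmxSr _ _)) (factmod_image_sub U V')).
  exact: submx_trans (submxMr _ (capmxSl _ _)) (addsmxSr U _).
have hY : is_submod Y := is_submod_of_span hU hC sCY sYC.
have GY : G (subm Y).
  by apply: strW; split; [exact: is_submod_factmod_image | exact: G_factmod_image].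
have GUC : G (subm (U :&: C)%MS).
  apply: G_subm_eqmx hN (is_submod_cap hU hV') _ (strU V' (conj hV' GV')).
  apply/eqmxP/andP; split; last exact: capmxS (submx_refl U) (capmxSr V V').
  by rewrite !sub_capmx capmxSl capmxSr (submx_trans (capmxSl _ _) (addsmxSl _ _)).
have hQ := is_submod_insubmx hC hUC (capmxSr U C).
apply: (extG _ _ (is_rmod_subm hN hC) hQ).
  apply: isoG _ _ (is_rmod_subm hN hUC) (is_rmod_subm (is_rmod_subm hN hC) hQ)
    (rmod_iso_subm_insubmx hC hUC (capmxSr U C)) GUC.
apply: isoG _ _ (is_rmod_subm (is_rmod_quotm hN hU) hY)
  (is_rmod_quotm (is_rmod_subm hN hC) hQ) (rmod_iso_sym (rmod_iso_quotm_cap hU hC sCY sYC)) GY.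
Qed.

Lemma strict_subobj_factmod_preim N (U : 'M[F]_(rdim N)) (W : 'M[F]_(rdim (quotm U))) :
  is_rmod N -> G N -> strict_subobj G U -> strict_subobj G W ->
  strict_subobj G (factmod_preim U W).
Proof.
move=> hN GN sU sW; have [[hU _] _] := sU; have [[hW _] _] := sW.
split=> [|V' [hV' GV']]; last exact: G_cap_factmod_preim.
split; first exact: is_submod_factmod_preim.
rewrite -(capmx1 (factmod_preim U W)); apply: G_cap_factmod_preim (is_submod1 N) _ => //.
have [isoG _ _] := tcG.
exact: isoG _ _ hN (is_rmod_subm hN (is_submod1 N)) (rmod_iso_subm1 N) GN.
Qed.

End StrictSubobjects.

Lemma IVT_sign_change (R : realType) (f : R -> R) (a b s t : R) :
  {within [set x : R | a <= x <= b], continuous f} -> a <= s <= b -> a <= t <= b ->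
  0 < f s -> f t <= 0 -> exists2 c, a <= c <= b & f c = 0.
Proof.
move=> fC /andP[a_s s_b] /andP[a_t t_b] fs ft.
have ivt l u : a <= l -> u <= b -> l <= u ->
    Num.min (f l) (f u) <= 0 <= Num.max (f l) (f u) -> exists2 c, a <= c <= b & f c = 0.
  move=> al ub lu f0.
  have sub_ab : `[l, u] `<=` [set x : R | a <= x <= b].
    move=> x /=; rewrite in_itv /= => /andP[lx xu].
    by rewrite (le_trans al lx) (le_trans xu ub).
  have [c] := IVT lu (continuous_subspaceW sub_ab fC) f0.
  by rewrite in_itv /= => /andP[lc cu] fc; exists c; rewrite ?(le_trans al lc) ?(le_trans cu ub).
have f0 : Num.min (f s) (f t) <= 0 <= Num.max (f s) (f t).
  by rewrite ge_min le_max ft (ltW fs) orbT.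
have [st|/ltW ts] := leP s t; first exact: ivt a_s t_b st f0.
by apply: ivt a_t s_b ts _; rewrite minC maxC.
Qed.

Section StrictQuotientPositivity.
Variables (F : fieldType) (A : falgType F) (R : realType) (G : rmod A -> Prop).
Hypothesis tcG : torsion_class G.
Implicit Types (N : rmod A) (theta : rmod A -> R).

Definition strict_quot_pos theta N :=
  forall U : 'M[F]_(rdim N), strict_subobj G U ->
    (0 < rdim (quotm U))%N -> 0 < theta (quotm U).

Lemma strict_quot_pos_ext theta theta' N : is_rmod N ->
  (forall X, is_rmod X -> theta X = theta' X) ->
  strict_quot_pos theta N -> strict_quot_pos theta' N.
Proof.
move=> hN eq_theta posN U sU qU.
by rewrite -eq_theta; [exact: posN | exact: is_rmod_quotm hN sU.1.1].
Qed.

Lemma strict_quot_pos_quotm theta N (U : 'M[F]_(rdim N)) :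
  in_V theta -> is_rmod N -> G N -> strict_subobj G U ->
  strict_quot_pos theta N -> strict_quot_pos theta (quotm U).
Proof.
move=> [isoV _] hN GN sU posN W sW qW; have [[hU _] _] := sU; have [[hW _] _] := sW.
have iso := rmod_iso_quotm_preim hU hW.
rewrite (isoV _ _ (is_rmod_quotm (is_rmod_quotm hN hU) hW)
  (is_rmod_quotm hN (is_submod_factmod_preim hU hW)) iso).
by apply: posN (strict_subobj_factmod_preim tcG hN GN sU sW) _; rewrite -iso.1.
Qed.

Lemma strict_quot_pos_gt0 theta N : in_V theta -> is_rmod N -> G N ->
  strict_quot_pos theta N -> (0 < rdim N)%N -> 0 < theta N.
Proof.
move=> thV hN GN posN N0; have [_ addV] := thV.
rewrite (addV N 0 hN (is_submod0 N)) (in_V_dim0 thV (X := subm 0)) ?add0r; last first.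
  by rewrite /= mxrank0.
by apply: posN (strict_subobj0 tcG hN GN) _; rewrite /= mxrank_coker mxrank0 subn0.
Qed.

Lemma in_pseudo_wall_of_strict_quot theta N : in_V theta -> is_rmod N -> theta N = 0 ->
  (forall U : 'M[F]_(rdim N), strict_subobj G U -> (0 < \rank U)%N ->
     (0 < rdim (quotm U))%N -> 0 < theta (quotm U)) ->
  in_pseudo_wall G N theta.
Proof.
move=> thV hN N0 posN; have [_ addV] := thV; split=> // U sU.
have [[hU _] _] := sU; have := addV N U hN hU; rewrite N0.
have [U0|Upos] := posnP (\rank U); first by rewrite (in_V_dim0 thV (X := subm U)).
have [Q0|Qpos] := posnP (rdim (quotm U)); first by rewrite (in_V_dim0 thV Q0) addr0 => <-.
by move/eqP; rewrite eq_sym addr_eq0 => /eqP ->; rewrite oppr_le0 ltW // posN.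
Qed.

Variable gamma : R -> rmod A -> R.
Hypothesis gamma_off_walls : forall t, 0 <= t <= 1 -> in_V (gamma t) /\ ~ in_W G (gamma t).
Hypothesis gamma_cont : forall N, is_rmod N ->
  {within [set t : R | 0 <= t <= 1], continuous (fun t => gamma t N)}.

Lemma strict_quot_pos_path N s t : is_rmod N -> G N -> 0 <= s <= 1 -> 0 <= t <= 1 ->
  strict_quot_pos (gamma s) N -> strict_quot_pos (gamma t) N.
Proof.
move=> hN GN; have [n] := ubnP (rdim N).
elim: n N hN GN s t => // n IH N hN GN s t dimN s01 t01 posN.
have posQ r : 0 <= r <= 1 -> forall U : 'M[F]_(rdim N), strict_subobj G U ->
    (0 < \rank U)%N -> (0 < rdim (quotm U))%N -> 0 < gamma r (quotm U).
  move=> r01 U sU Upos Qpos; have [[hU _] _] := sU.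
  have hQ := is_rmod_quotm hN hU; have [_ quotG _] := tcG.
  have GQ := quotG _ _ hN hU GN.
  have [rV _] := gamma_off_walls r01; have [sV _] := gamma_off_walls s01.
  apply: (strict_quot_pos_gt0 rV hQ GQ _ Qpos).
  apply: (IH _ hQ GQ s r _ s01 r01 (strict_quot_pos_quotm sV hN GN sU posN)).
  by move: Qpos; rewrite /= mxrank_coker; lia.
move=> U sU Qpos; have [[hU _] _] := sU.
have [U0|] := posnP (\rank U); last by move/posQ; apply.
rewrite ltNge; apply/negP => neg_t.
have [c c01 Qc0] :=
  IVT_sign_change (gamma_cont (is_rmod_quotm hN hU)) s01 t01 (posN U sU Qpos) neg_t.
have [cV []] := gamma_off_walls c01; exists N; split=> //.
  by move: Qpos; rewrite /= mxrank_coker; lia.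
apply: (in_pseudo_wall_of_strict_quot cV hN _ (posQ c c01)).
by rewrite (cV.2 N U hN hU) Qc0 (in_V_dim0 cV (X := subm U)) ?addr0.
Qed.

End StrictQuotientPositivity.

Theorem mainTheorem14 (F : fieldType) (A : falgType F) (R : realType)
    (G : rmod A -> Prop) (theta0 theta1 : rmod A -> R) :
  torsion_class G ->
  in_V theta0 -> ~ in_W G theta0 ->
  in_V theta1 -> ~ in_W G theta1 ->
  (exists gamma : R -> rmod A -> R,
     [/\ (forall M : rmod A, is_rmod M -> gamma 0 M = theta0 M),
         (forall M : rmod A, is_rmod M -> gamma 1 M = theta1 M),
         (forall t : R, 0 <= t <= 1 -> in_V (gamma t) /\ ~ in_W G (gamma t))
       & (forall M : rmod A, is_rmod M ->
            {within [set t : R | 0 <= t <= 1], continuous (fun t : R => gamma t M)})]) ->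
  forall M : rmod A, in_P G theta0 M <-> in_P G theta1 M.
Proof.
move=> tcG _ _ _ _ [gamma [gamma0 gamma1 gamma_off_walls gamma_cont]] M.
have transfer s t theta theta' : 0 <= s <= 1 -> 0 <= t <= 1 ->
    (forall X, is_rmod X -> gamma s X = theta X) ->
    (forall X, is_rmod X -> gamma t X = theta' X) ->
    in_P G theta M -> in_P G theta' M.
  move=> s01 t01 eq_s eq_t [hM [M0|[GM posM]]]; split=> //; [by left | right; split=> //].
  apply: (strict_quot_pos_ext hM eq_t).
  apply: (strict_quot_pos_path tcG gamma_off_walls gamma_cont hM GM s01 t01).
  by apply: strict_quot_pos_ext hM _ posM => X hX; rewrite eq_s.
have h0 : 0 <= (0 : R) <= 1 by rewrite lexx ler01.
have h1 : 0 <= (1 : R) <= 1 by rewrite lexx ler01.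
by split; [exact: transfer h0 h1 gamma0 gamma1 | exact: transfer h1 h0 gamma1 gamma0].
Qed.
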